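(* Let $t(x_1,\dots,x_n)$ be a Łukasiewicz $\mu$-term and $\vec r\in[0,1]^n$. For each threshold modality $\mathbb P_{\rtimes r}$, namely $\mathbb P_{>0}$, $\mathbb P_{=1}$, $\mathbb P_{>r}$ and $\mathbb P_{\ge r}$ with $r\in(0,1)$, one has $(\mathbb P_{\rtimes r}t)(\vec r)=1$ if $t(\vec r)\rtimes r$ holds, and $(\mathbb P_{\rtimes r}t)(\vec r)=0$ otherwise (where $\rtimes r$ stands for $>0$, $=1$, $>r$, $\ge r$ respectively).
   Context: Łukasiewicz $\mu$-terms: $t::=x\mid\underline0\mid\underline1\mid r\,t\mid t\sqcup t\mid t\sqcap t\mid t\oplus t\mid t\odot t\mid\mu x.t\mid\nu x.t$, with $r\in[0,1]$ real ($\mu,\nu$ bind). Value at $\vec r\in[0,1]^n$: $x_i\mapsto r_i$, constants $0,1$, $r\,t\mapsto r\cdot t(\vec r)$, $\sqcup,\sqcap$ max/min, $t_1\oplus t_2\mapsto\min(t_1(\vec r)+t_2(\vec r),1)$, $t_1\odot t_2\mapsto\max(t_1(\vec r)+t_2(\vec r)-1,0)$, $\mu y.t$, $\nu y.t$ the least/greatest fixed points on $[0,1]$ of $r'\mapsto t(\vec r,r')$. $\underline r$ denotes $r\,\underline1$. Threshold modalities: $\mathbb P_{>0}t=\mu y.(y\oplus t)$, $\mathbb P_{=1}t=\nu y.(y\odot t)$, $\mathbb P_{>r}t=\mathbb P_{>0}(t\odot\underline{1-r})$, $\mathbb P_{\ge r}t=\mathbb P_{=1}(t\oplus\underline{1-r})$,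 for $r\in(0,1)$ and $y$ not occurring in $t$. *)

From Stdlib Require Import Reals ClassicalEpsilon.
Open Scope R_scope.

Inductive lterm : Type :=
| LVar   : nat -> lterm
| LZero  : lterm
| LOne   : lterm
| LScale : R -> lterm -> lterm
| LJoin  : lterm -> lterm -> lterm
| LMeet  : lterm -> lterm -> lterm
| LOplus : lterm -> lterm -> lterm
| LOdot  : lterm -> lterm -> lterm
| LMu    : nat -> lterm -> lterm
| LNu    : nat -> lterm -> lterm.

Fixpoint wf (t : lterm) : Prop :=
  match t with
  | LVar _ | LZero | LOne => True
  | LScale r u => 0 <= r <= 1 /\ wf u
  | LJoin u v | LMeet u v | LOplus u v | LOdot u v => wf u /\ wf v
  | LMu _ u | LNu _ u => wf u
  end.

Fixpoint occurs (y : nat) (t : lterm) : Prop :=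
  match t with
  | LVar x => x = y
  | LZero | LOne => False
  | LScale _ u => occurs y u
  | LJoin u v | LMeet u v | LOplus u v | LOdot u v => occurs y u \/ occurs y v
  | LMu x u | LNu x u => x = y \/ occurs y u
  end.

Definition is_lfp (f : R -> R) (x : R) : Prop :=
  (0 <= x <= 1) /\ f x = x /\ (forall z, 0 <= z <= 1 -> f z = z -> x <= z).
Definition is_gfp (f : R -> R) (x : R) : Prop :=
  (0 <= x <= 1) /\ f x = x /\ (forall z, 0 <= z <= 1 -> f z = z -> z <= x).

(* the least (greatest) fixed point on [0,1]; default 0 if it does not exist
   (it always exists for the monotone maps denoted by well-formed terms) *)
Definition lfp (f : R -> R) : R :=
  match excluded_middle_informative (exists x, is_lfp f x) with
  | left H => proj1_sig (constructive_indefinite_description _ H)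
  | right _ => 0
  end.
Definition gfp (f : R -> R) : R :=
  match excluded_middle_informative (exists x, is_gfp f x) with
  | left H => proj1_sig (constructive_indefinite_description _ H)
  | right _ => 0
  end.

Definition upd (rho : nat -> R) (x : nat) (v : R) : nat -> R :=
  fun i => if Nat.eqb i x then v else rho i.

Fixpoint eval (rho : nat -> R) (t : lterm) : R :=
  match t with
  | LVar x => rho x
  | LZero => 0
  | LOne => 1
  | LScale r u => r * eval rho u
  | LJoin u v => Rmax (eval rho u) (eval rho v)
  | LMeet u v => Rmin (eval rho u) (eval rho v)
  | LOplus u v => Rmin (eval rho u + eval rho v) 1
  | LOdot u v => Rmax (eval rho u + eval rho v - 1) 0
  | LMu x u => lfp (fun v => eval (upd rho x v) u)
  | LNu x u => gfp (fun v => eval (upd rho x v) u)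
  end.

Definition LConst (r : R) : lterm := LScale r LOne.

(* Threshold modalities, with bound variable y (assumed not to occur in t) *)
Definition Pgt0 (y : nat) (t : lterm) : lterm := LMu y (LOplus (LVar y) t).
Definition Peq1 (y : nat) (t : lterm) : lterm := LNu y (LOdot (LVar y) t).
Definition Pgt (y : nat) (r : R) (t : lterm) : lterm :=
  Pgt0 y (LOdot t (LConst (1 - r))).
Definition Pge (y : nat) (r : R) (t : lterm) : lterm :=
  Peq1 y (LOplus t (LConst (1 - r))).

(* Since the bound variable y does not occur in t, P_{>0} t and P_{=1} t are
   the extremal fixed points of v |-> min(v + a, 1) and v |-> max(v + a - 1, 0)
   with a := t(rho). The first has 1 as its only fixed point when a > 0 and
   0 as its least one when a = 0; dually, the second fixes only 0 when a < 1
   and everything when a = 1. P_{>r} and P_{>=r} reduce to these because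
   (t ⊙ 1-r)(rho) > 0 iff t(rho) > r and (t ⊕ 1-r)(rho) = 1 iff t(rho) >= r. *)
From Stdlib Require Import Reals Lra FunctionalExtensionality ClassicalEpsilon.
Open Scope R_scope.

Lemma eval_ext (t : lterm) (rho rho' : nat -> R) :
  (forall x, occurs x t -> rho x = rho' x) -> eval rho t = eval rho' t.
Proof.
  revert rho rho'.
  induction t as [x| | |s u IHu|u IHu v IHv|u IHu v IHv|u IHu v IHv|u IHu v IHv
                 |x u IHu|x u IHu]; intros rho rho' Hagree; simpl in *;
    try reflexivity.
  - now apply Hagree.
  - now rewrite (IHu rho rho').
  - now rewrite (IHu rho rho'), (IHv rho rho') by auto.
  - now rewrite (IHu rho rho'), (IHv rho rho') by auto.
  - now rewrite (IHu rho rho'), (IHv rho rho') by auto.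
  - now rewrite (IHu rho rho'), (IHv rho rho') by auto.
  - f_equal; apply functional_extensionality; intro w; apply IHu.
    intros z Hz; unfold upd; destruct (Nat.eqb z x); auto.
  - f_equal; apply functional_extensionality; intro w; apply IHu.
    intros z Hz; unfold upd; destruct (Nat.eqb z x); auto.
Qed.

Lemma eval_upd_not_occurs (t : lterm) (rho : nat -> R) (y : nat) (v : R) :
  ~ occurs y t -> eval (upd rho y v) t = eval rho t.
Proof.
  intro Hy; apply eval_ext; intros x Hx; unfold upd.
  destruct (Nat.eqb x y) eqn:Exy; auto.
  apply Nat.eqb_eq in Exy; subst; contradiction.
Qed.

Lemma lfp_unique (f : R -> R) (x : R) : is_lfp f x -> lfp f = x.
Proof.
  intro Hfp; pose proof Hfp as [Hx [Hfx Hleast]]; unfold lfp.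
  destruct (excluded_middle_informative _) as [Hex|Hnex].
  - destruct (constructive_indefinite_description _ Hex) as [x' [Hx' [Hfx' Hleast']]].
    simpl; apply Rle_antisym; [apply Hleast'|apply Hleast]; assumption.
  - exfalso; apply Hnex; exists x; exact Hfp.
Qed.

Lemma lfp_default (f : R -> R) : (forall x, ~ is_lfp f x) -> lfp f = 0.
Proof.
  intro Hnone; unfold lfp.
  destruct (excluded_middle_informative _) as [[x Hx]|]; auto.
  destruct (Hnone x Hx).
Qed.

Lemma gfp_unique (f : R -> R) (x : R) : is_gfp f x -> gfp f = x.
Proof.
  intro Hfp; pose proof Hfp as [Hx [Hfx Hgreatest]]; unfold gfp.
  destruct (excluded_middle_informative _) as [Hex|Hnex].
  - destruct (constructive_indefinite_description _ Hex) as [x' [Hx' [Hfx' Hgreatest']]].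
    simpl; apply Rle_antisym; [apply Hgreatest|apply Hgreatest']; assumption.
  - exfalso; apply Hnex; exists x; exact Hfp.
Qed.

Lemma gfp_default (f : R -> R) : (forall x, ~ is_gfp f x) -> gfp f = 0.
Proof.
  intro Hnone; unfold gfp.
  destruct (excluded_middle_informative _) as [[x Hx]|]; auto.
  destruct (Hnone x Hx).
Qed.

Lemma lfp_oplus_pos (a : R) : 0 < a -> lfp (fun v => Rmin (v + a) 1) = 1.
Proof.
  intro Ha; apply lfp_unique; unfold Rmin; split; [lra|split].
  - destruct (Rle_dec (1 + a) 1); lra.
  - intros z Hz Hfix; destruct (Rle_dec (z + a) 1); lra.
Qed.

(* For a < 0 (impossible for a well-formed term) the map has no fixed point
   and the value 0 is the junk default of [lfp]. *)
Lemma lfp_oplus_nonpos (a : R) : ~ (0 < a) -> lfp (fun v => Rmin (v + a) 1) = 0.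
Proof.
  intro Ha; destruct (Req_dec a 0) as [->|Ha0].
  - apply lfp_unique; unfold Rmin; split; [lra|split].
    + destruct (Rle_dec (0 + 0) 1); lra.
    + intros; lra.
  - apply lfp_default; intros x [Hx [Hfix _]]; unfold Rmin in Hfix.
    destruct (Rle_dec (x + a) 1); lra.
Qed.

Lemma gfp_odot_one (a : R) : a = 1 -> gfp (fun v => Rmax (v + a - 1) 0) = 1.
Proof.
  intros ->; apply gfp_unique; unfold Rmax; split; [lra|split].
  - destruct (Rle_dec (1 + 1 - 1) 0); lra.
  - intros; lra.
Qed.

(* For a > 1 the map has no fixed point, so 0 is again the junk default. *)
Lemma gfp_odot_neq1 (a : R) : a <> 1 -> gfp (fun v => Rmax (v + a - 1) 0) = 0.
Proof.
  intro Ha; destruct (Rlt_dec a 1) as [Hlt|Hge].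
  - apply gfp_unique; unfold Rmax; split; [lra|split].
    + destruct (Rle_dec (0 + a - 1) 0); lra.
    + intros z Hz Hfix; destruct (Rle_dec (z + a - 1) 0); lra.
  - apply gfp_default; intros x [Hx [Hfix _]]; unfold Rmax in Hfix.
    destruct (Rle_dec (x + a - 1) 0); lra.
Qed.

Lemma eval_Pgt0 (rho : nat -> R) (y : nat) (t : lterm) : ~ occurs y t ->
  eval rho (Pgt0 y t) = lfp (fun v => Rmin (v + eval rho t) 1).
Proof.
  intro Hy; simpl; f_equal; apply functional_extensionality; intro v.
  rewrite eval_upd_not_occurs by exact Hy.
  unfold upd; now rewrite Nat.eqb_refl.
Qed.

Lemma eval_Peq1 (rho : nat -> R) (y : nat) (t : lterm) : ~ occurs y t ->
  eval rho (Peq1 y t) = gfp (fun v => Rmax (v + eval rho t - 1) 0).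
Proof.
  intro Hy; simpl; f_equal; apply functional_extensionality; intro v.
  rewrite eval_upd_not_occurs by exact Hy.
  unfold upd; now rewrite Nat.eqb_refl.
Qed.

Lemma not_occurs_odot_const (y : nat) (t : lterm) (s : R) :
  ~ occurs y t -> ~ occurs y (LOdot t (LConst s)).
Proof. intros Hy [H|H]; [exact (Hy H)|exact H]. Qed.

Lemma not_occurs_oplus_const (y : nat) (t : lterm) (s : R) :
  ~ occurs y t -> ~ occurs y (LOplus t (LConst s)).
Proof. intros Hy [H|H]; [exact (Hy H)|exact H]. Qed.

Lemma eval_odot_const_pos (rho : nat -> R) (t : lterm) (r : R) :
  0 < eval rho (LOdot t (LConst (1 - r))) <-> eval rho t > r.
Proof. simpl; unfold Rmax; destruct (Rle_dec _ _); split; lra. Qed.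

Lemma eval_oplus_const_one (rho : nat -> R) (t : lterm) (r : R) :
  eval rho (LOplus t (LConst (1 - r))) = 1 <-> eval rho t >= r.
Proof. simpl; unfold Rmin; destruct (Rle_dec _ _); split; lra. Qed.

Lemma eval_Pgt0_cases (rho : nat -> R) (y : nat) (t : lterm) : ~ occurs y t ->
  (0 < eval rho t -> eval rho (Pgt0 y t) = 1) /\
  (~ (0 < eval rho t) -> eval rho (Pgt0 y t) = 0).
Proof.
  intro Hy; rewrite eval_Pgt0 by exact Hy.
  split; [apply lfp_oplus_pos|apply lfp_oplus_nonpos].
Qed.

Lemma eval_Peq1_cases (rho : nat -> R) (y : nat) (t : lterm) : ~ occurs y t ->
  (eval rho t = 1 -> eval rho (Peq1 y t) = 1) /\
  (eval rho t <> 1 -> eval rho (Peq1 y t) = 0).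
Proof.
  intro Hy; rewrite eval_Peq1 by exact Hy.
  split; [apply gfp_odot_one|apply gfp_odot_neq1].
Qed.

Theorem mainTheorem8 :
  forall (t : lterm) (rho : nat -> R) (y : nat) (r : R),
    wf t ->
    (forall i, 0 <= rho i <= 1) ->
    ~ occurs y t ->
    0 < r < 1 ->
    ((0 < eval rho t -> eval rho (Pgt0 y t) = 1) /\
     (~ (0 < eval rho t) -> eval rho (Pgt0 y t) = 0)) /\
    ((eval rho t = 1 -> eval rho (Peq1 y t) = 1) /\
     (eval rho t <> 1 -> eval rho (Peq1 y t) = 0)) /\
    ((eval rho t > r -> eval rho (Pgt y r t) = 1) /\
     (~ (eval rho t > r) -> eval rho (Pgt y r t) = 0)) /\
    ((eval rho t >= r -> eval rho (Pge y r t) = 1) /\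
     (~ (eval rho t >= r) -> eval rho (Pge y r t) = 0)).
Proof.
  intros t rho y r _ _ Hy _.
  pose proof (eval_odot_const_pos rho t r) as Hgt.
  pose proof (eval_oplus_const_one rho t r) as Hge.
  destruct (eval_Pgt0_cases rho y (LOdot t (LConst (1 - r)))
              (not_occurs_odot_const y t (1 - r) Hy)) as [Hgt1 Hgt0].
  destruct (eval_Peq1_cases rho y (LOplus t (LConst (1 - r)))
              (not_occurs_oplus_const y t (1 - r) Hy)) as [Hge1 Hge0].
  unfold Pgt, Pge.
  split; [now apply eval_Pgt0_cases|].
  split; [now apply eval_Peq1_cases|].
  split; split; intro Hcase.
  - apply Hgt1, Hgt, Hcase.
  - apply Hgt0; intro Hpos; apply Hcase, Hgt, Hpos.
  - apply Hge1, Hge, Hcase.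
  - apply Hge0; intro Hone; apply Hcase, Hge, Hone.
Qed.
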